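(* Let $\mathcal{X}_q$ be constructed from $(\Pi_+,\Pi_-,\Lambda)$ as in the context. Let $r_1<r_2<\dots$ be the record indices of $\Pi_+$. Define $\rho_1=\Pi_-^{-1}(1)$ and $\rho_{i+1}=\Pi_-^{-1}\big(\min\{\Pi_-(k):k>\rho_i\}\big)$ for $i\ge1$. Let $m\in\mathbb{N}$ be minimal such that $k_{1-\rho_m}<\ell_1$. Then the standard record representation of $\mathcal{X}_q$ is $$(\dots,k_{1-\rho_{m+2}},k_{1-\rho_{m+1}},\underline{k_{1-\rho_m}},\ell_{r_1},\ell_{r_2},\dots),$$ where the underlined entry has index $0$ (i.e. the record index with index $j\le0$ is $k_{1-\rho_{m-j}}$, and the one with index $j\ge1$ is $\ell_{r_j}$).
   Context: Fix $q\in[0,1)$. A Mallows permutation on $\mathbb{N}$ with parameter $q$ is $(I_1,I_2,\dots)$ where $(B_{i,j})_{i,j\ge1}$ are independent Bernoulli$(1-q)$ and $I_i=\min\{j\notin\{I_1,\dots,I_{i-1}\}:B_{i,j}=1\}$. Let $\Pi_+,\Pi_-$ be independent Mallows permutations on $\mathbb{N}$; $(M_i)_{i\ge1}$ independent with $\mathbb{P}(M_i=m)=q^{im}(1-q^i)$; $\Lambda=(\Lambda_1\ge\Lambda_2\ge\dots\ge0)$ with $|\{j:\Lambda_j=i\}|=M_i$ for $i\ge1$; $\ell_i=i-\Lambda_i$ for $i\ge1$; $k_0>k_{-1}>k_{-2}>\dots$ enumerate $\mathbb{Z}\setminus\{\ell_i:i\ge1\}$. Define the permutation $\mathcal{X}_q$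 of $\mathbb{Z}$ by $\mathcal{X}_q(\ell_i)=\Pi_+(i)$ and $\mathcal{X}_q(k_i)=1-\Pi_-(1-i)$ for $i\le0$ (the two-sided infinite Mallows permutation; it is a.s. admissible). For a permutation $\sigma$ of $\mathbb{N}$ or $\mathbb{Z}$, a record index is $r$ with $\sigma(r)>\sigma(k)$ for all $k<r$ in the domain. For $\sigma$ of $\mathbb{Z}$ with two-sided infinitely many record indices, the standard record representation is their increasing enumeration $(r_k)_{k\in\mathbb{Z}}$ indexed so that $\sigma(r_0)\le0<\sigma(r_1)$. *)

(* nat for N-indexed objects (N = {1,2,...}), Z for Z-indexed ones. *)
From Stdlib Require Import ZArith Lia.
Open Scope Z_scope.

(* A permutation of N = {1,2,3,...}, given as a function nat -> nat
   (its value at 0 is irrelevant). *)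
Definition perm_N (P : nat -> nat) : Prop :=
  (forall n, (1 <= n)%nat -> (1 <= P n)%nat) /\
  (forall a b, (1 <= a)%nat -> (1 <= b)%nat -> P a = P b -> a = b) /\
  (forall v, (1 <= v)%nat -> exists n, (1 <= n)%nat /\ P n = v).

(* Lambda = (Lambda_1 >= Lambda_2 >= ... >= 0) with finitely many nonzero
   parts (a.s. the case since sum_i q^i < oo), i.e. a partition such that
   |{j : Lambda_j = i}| =: M_i is finitely supported. *)
Definition is_partition (L : nat -> nat) : Prop :=
  (forall j, (1 <= j)%nat -> (L (S j) <= L j)%nat) /\
  (exists N, forall j, (N <= j)%nat -> L j = 0%nat).

(* the multiplicity M_i = |{j >= 1 : Lambda_j = i}| is encoded through L *)

Definition ell (L : nat -> nat) (i : nat) : Z := Z.of_nat i - Z.of_nat (L i).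

Definition enum_complement (L : nat -> nat) (k : Z -> Z) : Prop :=
  (forall i j, i < j <= 0 -> k i < k j) /\
  (forall i, i <= 0 -> forall j, (1 <= j)%nat -> k i <> ell L j) /\
  (forall z, (forall j, (1 <= j)%nat -> z <> ell L j) ->
             exists i, i <= 0 /\ k i = z).

Definition two_sided_from (Pp Pm L : nat -> nat) (k X : Z -> Z) : Prop :=
  (forall i, (1 <= i)%nat -> X (ell L i) = Z.of_nat (Pp i)) /\
  (forall i, i <= 0 -> X (k i) = 1 - Z.of_nat (Pm (Z.to_nat (1 - i)))).

Definition is_record_N (s : nat -> nat) (r : nat) : Prop :=
  (1 <= r)%nat /\ forall j, (1 <= j < r)%nat -> (s j < s r)%nat.

Definition record_enum_N (s : nat -> nat) (r : nat -> nat) : Prop :=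
  (forall i j, (1 <= i < j)%nat -> (r i < r j)%nat) /\
  (forall i, (1 <= i)%nat -> is_record_N s (r i)) /\
  (forall p, is_record_N s p -> exists i, (1 <= i)%nat /\ r i = p).

Definition is_record_Z (X : Z -> Z) (p : Z) : Prop :=
  forall j, j < p -> X j < X p.

Definition std_record_rep (X : Z -> Z) (R : Z -> Z) : Prop :=
  (forall i j, i < j -> R i < R j) /\
  (forall i, is_record_Z X (R i)) /\
  (forall p, is_record_Z X p -> exists i, R i = p) /\
  X (R 0) <= 0 < X (R 1).

Definition rho_seq (Pm : nat -> nat) (rho : nat -> nat) : Prop :=
  (1 <= rho 1%nat)%nat /\ Pm (rho 1%nat) = 1%nat /\
  (forall i, (1 <= i)%nat ->
     (rho i < rho (S i))%nat /\
     forall j, (rho i < j)%nat -> (Pm (rho (S i)) <= Pm j)%nat).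

Definition minimal_m (L : nat -> nat) (k : Z -> Z) (rho : nat -> nat) (m : nat)
  : Prop :=
  (1 <= m)%nat /\ k (1 - Z.of_nat (rho m)) < ell L 1%nat /\
  (forall m', (1 <= m' < m)%nat -> ell L 1%nat <= k (1 - Z.of_nat (rho m'))).

(* The positions of X_q split into the increasing sequence ell_1 < ell_2 < ...
   and the complementary sequence ... < k_{-1} < k_0, with X_q > 0 on the first
   and X_q <= 0 on the second.  Hence ell_i is a record of X_q iff i is a record
   of Pi_+, while k_{1-n} is a record iff nothing of the first kind lies to its
   left (k_{1-n} < ell_1) and n is a right-to-left minimum of Pi_-, i.e. n is
   one of the rho_t.  The condition k_{1-rho_t} < ell_1 holds exactly for
   t >= m, and listing these records in increasing order gives the claim. *)
From Stdlib Require Import ZArith Lia Classical.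
Open Scope Z_scope.

Lemma strict_incr_from_succ (f : nat -> Z) :
  (forall i, (1 <= i)%nat -> f i < f (S i)) ->
  forall a b, (1 <= a)%nat -> (a < b)%nat -> f a < f b.
Proof.
  intros Hf a b Ha Hab. induction Hab as [|b Hab IH].
  - apply Hf; lia.
  - specialize (Hf b ltac:(lia)). lia.
Qed.

Section Ell.
Variable L : nat -> nat.
Hypothesis HL : is_partition L.

Lemma ell_lt a b : (1 <= a)%nat -> (a < b)%nat -> ell L a < ell L b.
Proof.
  apply strict_incr_from_succ. intros i Hi.
  destruct HL as [Hdec _]. specialize (Hdec i Hi). unfold ell. lia.
Qed.

Lemma ell_lt_iff a b : (1 <= a)%nat -> (1 <= b)%nat ->
  ell L a < ell L b <-> (a < b)%nat.
Proof.
  intros Ha Hb. split; [|now apply ell_lt].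
  intros Hlt. destruct (Nat.lt_total a b) as [|[->|Hba]]; [easy|lia|].
  pose proof (ell_lt b a Hb Hba). lia.
Qed.

Lemma ell_1_le j : (1 <= j)%nat -> ell L 1 <= ell L j.
Proof.
  intros Hj. destruct (Nat.eq_dec j 1) as [->|]; [lia|].
  pose proof (ell_lt 1 j (le_n 1) ltac:(lia)). lia.
Qed.

End Ell.

Section Complement.
Variables (L : nat -> nat) (k : Z -> Z).
Hypothesis Hk : enum_complement L k.

Lemma k_lt_iff i j : i <= 0 -> j <= 0 -> k i < k j <-> i < j.
Proof.
  destruct Hk as [Hinc _]. intros Hi Hj. split; [|intros; apply Hinc; lia].
  intros Hlt. destruct (Z.lt_total i j) as [|[->|Hji]]; [easy|lia|].
  pose proof (Hinc j i ltac:(lia)). lia.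
Qed.

Lemma ell_or_complement z :
  (exists j, (1 <= j)%nat /\ z = ell L j) \/ (exists i, i <= 0 /\ z = k i).
Proof.
  destruct Hk as [_ [_ Hsurj]].
  destruct (classic (exists j, (1 <= j)%nat /\ z = ell L j)) as [|Hnot];
    [now left|right].
  destruct (Hsurj z) as [i [Hi <-]]; [|now exists i].
  intros j Hj ->. apply Hnot. now exists j.
Qed.

End Complement.

Definition is_rl_minimum (P : nat -> nat) (n : nat) : Prop :=
  forall n', (n < n')%nat -> (P n < P n')%nat.

Section Rho.
Variables Pm rho : nat -> nat.
Hypotheses (HPm : perm_N Pm) (Hrho : rho_seq Pm rho).

Lemma rho_lt a b : (1 <= a)%nat -> (a < b)%nat -> (rho a < rho b)%nat.
Proof.
  intros Ha Hab.
  enough (Z.of_nat (rho a) < Z.of_nat (rho b)) by lia.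
  revert a b Ha Hab. apply strict_incr_from_succ.
  intros i Hi. destruct Hrho as [_ [_ Hstep]]. destruct (Hstep i Hi). lia.
Qed.

Lemma rho_ge t : (1 <= t)%nat -> (t <= rho t)%nat.
Proof.
  intros Ht. induction Ht as [|t Ht IH].
  - destruct Hrho; lia.
  - pose proof (rho_lt t (S t) Ht (le_n _)). lia.
Qed.

(* Pm is injective, so the weak minimality in [rho_seq] is strict. *)
Lemma rho_rl_minimum t : (1 <= t)%nat -> is_rl_minimum Pm (rho t).
Proof.
  destruct HPm as [Hpos [Hinj _]]. destruct Hrho as [_ [HPm1 Hstep]].
  intros Ht j Hj. destruct t as [|t]; [lia|].
  assert (Hle : (Pm (rho (S t)) <= Pm j)%nat).
  { destruct t as [|t].
    - rewrite HPm1. apply Hpos. lia.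
    - apply (Hstep (S t)); [lia|].
      pose proof (rho_lt (S t) (S (S t)) ltac:(lia) (le_n _)). lia. }
  assert (Pm (rho (S t)) <> Pm j); [|lia].
  pose proof (rho_ge (S t) ltac:(lia)).
  intros E. apply Hinj in E; lia.
Qed.

(* Either some rho_s equals n or rho_s <= n for all s: rho_(s+1) > n >= rho_s
   would contradict the choice of rho_(s+1).  The latter fails at s = n+1. *)
Lemma rl_minimum_rho n : (1 <= n)%nat -> is_rl_minimum Pm n ->
  exists t, (1 <= t)%nat /\ rho t = n.
Proof.
  destruct HPm as [Hpos _]. destruct Hrho as [_ [HPm1 Hstep]].
  intros Hn Hmin.
  assert (Hbelow : forall s, (1 <= s)%nat ->
            (exists t, (1 <= t)%nat /\ rho t = n) \/ (rho s <= n)%nat).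
  { intros s Hs. induction Hs as [|s Hs IH].
    - right. destruct (Nat.le_gt_cases (rho 1%nat) n) as [|Hgt]; [easy|].
      specialize (Hmin _ Hgt). specialize (Hpos n Hn). lia.
    - destruct IH as [|Hle]; [now left|].
      destruct (Nat.eq_dec (rho s) n) as [E|Hne]; [left; now exists s|right].
      destruct (Hstep s Hs) as [_ Hmin_s].
      specialize (Hmin_s n ltac:(lia)).
      destruct (Nat.le_gt_cases (rho (S s)) n) as [|Hgt]; [easy|].
      specialize (Hmin _ Hgt). lia. }
  destruct (Hbelow (S n) ltac:(lia)) as [|Hle]; [easy|].
  pose proof (rho_ge (S n) ltac:(lia)). lia.
Qed.

End Rho.

Section Records.
Variables (Pp Pm L : nat -> nat) (k X : Z -> Z).
Hypotheses (HPp : perm_N Pp) (HPm : perm_N Pm) (HL : is_partition L)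
  (Hk : enum_complement L k) (HX : two_sided_from Pp Pm L k X).

Lemma X_ell i : (1 <= i)%nat -> X (ell L i) = Z.of_nat (Pp i).
Proof. destruct HX as [HXl _]. apply HXl. Qed.

Lemma X_k n : (1 <= n)%nat -> X (k (1 - Z.of_nat n)) = 1 - Z.of_nat (Pm n).
Proof.
  destruct HX as [_ HXk]. intros Hn. rewrite HXk by lia. do 3 f_equal. lia.
Qed.

Lemma X_ell_pos i : (1 <= i)%nat -> 1 <= X (ell L i).
Proof. destruct HPp as [Hpos _]. intros Hi. rewrite X_ell by easy. specialize (Hpos i Hi). lia. Qed.

Lemma X_k_nonpos i : i <= 0 -> X (k i) <= 0.
Proof.
  destruct HPm as [Hpos _]. intros Hi.
  replace i with (1 - Z.of_nat (Z.to_nat (1 - i))) by lia.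
  rewrite X_k by lia. specialize (Hpos (Z.to_nat (1 - i)) ltac:(lia)). lia.
Qed.

Lemma record_ell_iff i : (1 <= i)%nat ->
  is_record_Z X (ell L i) <-> is_record_N Pp i.
Proof.
  intros Hi. split.
  - intros Hrec. split; [easy|]. intros j Hj.
    specialize (Hrec (ell L j) ltac:(apply ell_lt; easy || lia)).
    rewrite !X_ell in Hrec by lia. lia.
  - intros [_ Hrec] z Hz.
    destruct (ell_or_complement L k Hk z) as [[j [Hj ->]]|[i' [Hi' ->]]].
    + apply (ell_lt_iff L HL j i Hj Hi) in Hz.
      rewrite !X_ell by easy. specialize (Hrec j ltac:(lia)). lia.
    + pose proof (X_k_nonpos i' Hi'). pose proof (X_ell_pos i Hi). lia.
Qed.

Lemma record_k_iff n : (1 <= n)%nat ->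
  is_record_Z X (k (1 - Z.of_nat n)) <->
  k (1 - Z.of_nat n) < ell L 1 /\ is_rl_minimum Pm n.
Proof.
  intros Hn. split.
  - intros Hrec. split.
    + destruct Hk as [_ [Hne _]].
      specialize (Hne (1 - Z.of_nat n) ltac:(lia) 1%nat (le_n 1)).
      destruct (Z.lt_total (k (1 - Z.of_nat n)) (ell L 1)) as [|[|Hgt]];
        [easy|easy|].
      specialize (Hrec _ Hgt).
      pose proof (X_ell_pos 1 (le_n 1)). pose proof (X_k_nonpos (1 - Z.of_nat n)).
      lia.
    + intros n' Hn'.
      specialize (Hrec (k (1 - Z.of_nat n'))
                    ltac:(apply (k_lt_iff L k Hk); lia)).
      rewrite !X_k in Hrec by lia. lia.
  - intros [Hlt Hmin] z Hz.
    destruct (ell_or_complement L k Hk z) as [[j [Hj ->]]|[i' [Hi' ->]]].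
    + pose proof (ell_1_le L HL j Hj). lia.
    + apply (k_lt_iff L k Hk i' (1 - Z.of_nat n) Hi' ltac:(lia)) in Hz.
      replace i' with (1 - Z.of_nat (Z.to_nat (1 - i'))) by lia.
      rewrite !X_k by lia. specialize (Hmin (Z.to_nat (1 - i')) ltac:(lia)). lia.
Qed.

End Records.

Definition record_rep (L : nat -> nat) (k : Z -> Z) (r rho : nat -> nat)
  (m : nat) (j : Z) : Z :=
  if j <=? 0
  then k (1 - Z.of_nat (rho (Z.to_nat (Z.of_nat m - j))))
  else ell L (r (Z.to_nat j)).

Section RecordRep.
Variables (Pp Pm L : nat -> nat) (k X : Z -> Z) (r rho : nat -> nat) (m : nat).
Hypotheses (HPp : perm_N Pp) (HPm : perm_N Pm) (HL : is_partition L)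
  (Hk : enum_complement L k) (HX : two_sided_from Pp Pm L k X)
  (Hr : record_enum_N Pp r) (Hrho : rho_seq Pm rho) (Hm : minimal_m L k rho m).

Let R := record_rep L k r rho m.

Lemma record_rep_k t : (m <= t)%nat ->
  R (Z.of_nat m - Z.of_nat t) = k (1 - Z.of_nat (rho t)).
Proof.
  intros Ht. unfold R, record_rep.
  destruct (Z.leb_spec (Z.of_nat m - Z.of_nat t) 0); [|lia].
  do 4 f_equal. lia.
Qed.

Lemma record_rep_ell j : (1 <= j)%nat -> R (Z.of_nat j) = ell L (r j).
Proof.
  intros Hj. unfold R, record_rep.
  destruct (Z.leb_spec (Z.of_nat j) 0); [lia|]. now rewrite Nat2Z.id.
Qed.

Lemma record_rep_cases (P : Z -> Z -> Prop) :
  (forall t, (m <= t)%nat ->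
     P (Z.of_nat m - Z.of_nat t) (k (1 - Z.of_nat (rho t)))) ->
  (forall j, (1 <= j)%nat -> P (Z.of_nat j) (ell L (r j))) ->
  forall i, P i (R i).
Proof.
  intros Hneg Hpos i. destruct (Z.leb_spec i 0).
  - replace i with (Z.of_nat m - Z.of_nat (Z.to_nat (Z.of_nat m - i))) by lia.
    rewrite record_rep_k by lia. apply Hneg. lia.
  - replace i with (Z.of_nat (Z.to_nat i)) by lia.
    rewrite record_rep_ell by lia. apply Hpos. lia.
Qed.

Lemma r_pos j : (1 <= j)%nat -> (1 <= r j)%nat.
Proof. destruct Hr as [_ [Hrec _]]. intros Hj. now destruct (Hrec j Hj). Qed.

Lemma k_rho_lt_ell_1_iff t : (1 <= t)%nat ->
  k (1 - Z.of_nat (rho t)) < ell L 1 <-> (m <= t)%nat.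
Proof.
  destruct Hm as [Hm1 [Hkm Hmin]]. intros Ht. split.
  - intros Hlt. destruct (Nat.le_gt_cases m t) as [|Htm]; [easy|].
    specialize (Hmin t ltac:(lia)). lia.
  - intros Hmt. destruct (Nat.eq_dec m t) as [<-|Hne]; [easy|].
    pose proof (rho_lt Pm rho Hrho m t Hm1 ltac:(lia)).
    pose proof (rho_ge Pm rho Hrho m Hm1).
    enough (k (1 - Z.of_nat (rho t)) < k (1 - Z.of_nat (rho m))) by lia.
    apply (k_lt_iff L k Hk); lia.
Qed.

Lemma record_rep_increasing i j : i < j -> R i < R j.
Proof.
  destruct Hm as [Hm1 _].
  revert j. pattern i, (R i). apply record_rep_cases; intros t Ht j;
    pattern j, (R j); apply record_rep_cases; intros s Hs Hlt.
  - pose proof (rho_lt Pm rho Hrho s t ltac:(lia) ltac:(lia)).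
    pose proof (rho_ge Pm rho Hrho s ltac:(lia)).
    apply (k_lt_iff L k Hk); lia.
  - apply (k_rho_lt_ell_1_iff t ltac:(lia)) in Ht.
    pose proof (ell_1_le L HL (r s) (r_pos s Hs)). lia.
  - lia.
  - destruct Hr as [Hinc _]. apply ell_lt; [easy|apply r_pos; easy|].
    apply Hinc. lia.
Qed.

Lemma record_rep_is_record i : is_record_Z X (R i).
Proof.
  pattern i, (R i). apply record_rep_cases.
  - intros t Ht. assert (Ht1 : (1 <= t)%nat) by (destruct Hm; lia).
    pose proof (rho_ge Pm rho Hrho t Ht1).
    apply (record_k_iff Pp Pm L k X); try easy; [lia|]. split.
    + now apply k_rho_lt_ell_1_iff.
    + now apply (rho_rl_minimum Pm rho).
  - intros j Hj. destruct Hr as [_ [Hrec _]].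
    apply (record_ell_iff Pp Pm L k X); auto. now apply r_pos.
Qed.

Lemma record_rep_surjective p : is_record_Z X p -> exists i, R i = p.
Proof.
  intros Hp. destruct (ell_or_complement L k Hk p) as [[j [Hj ->]]|[i [Hi ->]]].
  - apply (record_ell_iff Pp Pm L k X) in Hp; try easy.
    destruct Hr as [_ [_ Hsurj]]. destruct (Hsurj j Hp) as [x [Hx <-]].
    exists (Z.of_nat x). now apply record_rep_ell.
  - assert (Hn : (1 <= Z.to_nat (1 - i))%nat) by lia.
    replace i with (1 - Z.of_nat (Z.to_nat (1 - i))) in Hp |- * by lia.
    apply (record_k_iff Pp Pm L k X) in Hp; try easy.
    destruct Hp as [Hlt Hmin].
    destruct (rl_minimum_rho Pm rho HPm Hrho _ Hn Hmin) as [t [Ht Et]].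
    rewrite <- Et in Hlt |- *.
    exists (Z.of_nat m - Z.of_nat t). apply record_rep_k.
    now apply k_rho_lt_ell_1_iff.
Qed.

Lemma record_rep_normalized : X (R 0) <= 0 < X (R 1).
Proof.
  destruct Hm as [Hm1 _]. split.
  - pose proof (record_rep_k m (le_n m)) as E. rewrite Z.sub_diag in E.
    rewrite E.
    pose proof (rho_ge Pm rho Hrho m Hm1). apply (X_k_nonpos Pp Pm L k X HPm HX); lia.
  - change 1 with (Z.of_nat 1). rewrite record_rep_ell by lia.
    pose proof (X_ell_pos Pp Pm L k X HPp HX (r 1%nat) (r_pos 1 (le_n 1))). lia.
Qed.

End RecordRep.

Theorem proposition3p1 (Pp Pm L : nat -> nat) (k X : Z -> Z)
  (r rho : nat -> nat) (m : nat)
  (HPp : perm_N Pp) (HPm : perm_N Pm) (HL : is_partition L)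
  (Hk : enum_complement L k) (HX : two_sided_from Pp Pm L k X)
  (Hr : record_enum_N Pp r) (Hrho : rho_seq Pm rho)
  (Hm : minimal_m L k rho m) :
  std_record_rep X
    (fun j => if j <=? 0
              then k (1 - Z.of_nat (rho (Z.to_nat (Z.of_nat m - j))))
              else ell L (r (Z.to_nat j))).
Proof.
  change (std_record_rep X (record_rep L k r rho m)).
  split; [|split; [|split]].
  - apply (record_rep_increasing Pp Pm); assumption.
  - apply (record_rep_is_record Pp Pm); assumption.
  - apply (record_rep_surjective Pp Pm); assumption.
  - apply (record_rep_normalized Pp Pm); assumption.
Qed.
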